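(* Let $z=(z_1,\dots,z_l)$ be a complex vector split into sub-vectors, and let $g_j(z)=\tilde g_j(z)+c_j$, $j=1,\dots,m$, where $c_j\in\mathbb C$ and each $\tilde g_j(z_1,\dots,z_l)$ is multi-linear in the sub-vectors; let $f=\sum_{j=1}^m|g_j|^2$. Let \[ \Xi=\begin{pmatrix} z_1&z_1&\cdots&z_1\\ -z_2&0&\cdots&0\\ 0&-z_3&\cdots&0\\ \vdots&\vdots&\ddots&\vdots\\ 0&0&\cdots&-z_l\end{pmatrix} \] (with $l-1$ block columns, the $i$-th having $z_1$ in the first block and $-z_{i+1}$ in the $(i+1)$-st block). Assume at the current point $z$ the kernel of the mixed Wirtinger Hessian $\frac{\partial^2 f}{\partial\bar z\partial z}$ is spanned by the columns of $\Xi$. Then $\frac{\partial^2 f}{\partial\bar z\partial z}+\Xi\Xi^*$ is invertible, the limit $\lim_{\varepsilon\to0^+}\big(\frac{\partial^2 f}{\partial\bar z\partial z}+\varepsilon\Xi\Xi^*\big)^{-1}\frac{\partial f}{\partial\bar z}$ exists, and \[ z-\Big(\tfrac{\partial^2 f}{\partial\bar z\partial z}+\Xi\Xi^*\Big)^{-1}\tfrac{\partial f}{\partial\bar z}=z-\lim_{\varepsilon\to0}\Big(\tfrac{\partial^2 f}{\partial\bar z\partial z}+\varepsilon\Xi\Xi^*\Big)^{-1}\tfrac{\partial f}{\partial\bar z}. \]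
   Context: Wirtinger derivatives: $\frac{\partial}{\partial\bar z}=\frac12(\frac{\partial}{\partial\mathrm{Re}\,z}+i\frac{\partial}{\partial\mathrm{Im}\,z})$ componentwise; for $f=\sum|g_j|^2$ with $g_j$ holomorphic, $\frac{\partial f}{\partial\bar z}=\sum_j g_j\overline{g_j'}$ and $\frac{\partial^2 f}{\partial\bar z\partial z}=\sum_j\overline{g_j'}(g_j')^T$, where $g_j'$ is the column vector of holomorphic derivatives. Multi-linear means linear in each sub-vector $z_i$ separately when the others are fixed. *)

From HB Require Import structures.
From mathcomp Require Import all_boot all_order all_algebra.
From mathcomp Require Import all_classical all_reals all_analysis.
From mathcomp Require Import complex.
Set Implicit Arguments. Unset Strict Implicit. Unset Printing Implicit Defensive.
Import Order.TTheory GRing.Theory Num.Theory.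
Import numFieldNormedType.Exports.
Local Open Scope ring_scope.

Section Defs.
Variable R : realType.
Local Notation C := R[i].

Definition conjmx (p q : nat) (A : 'M[C]_(p, q)) : 'M[C]_(p, q) :=
  map_mx Num.conj A.
Definition adjmx (p q : nat) (A : 'M[C]_(p, q)) : 'M[C]_(q, p) :=
  (conjmx A)^T.

(* The complex vector z = (z_1, ..., z_l) with l = L.+1 sub-vectors of sizes
   n i lives in 'cV[C]_(\sum_i n i); its i-th sub-vector is submxcol z i. *)
Variables (L : nat) (n : 'I_L.+1 -> nat).
Local Notation N := (\sum_(i < L.+1) n i)%N.

Definition multilinear (h : 'cV[C]_N -> C) : Prop :=
  forall (zz : forall k : 'I_L.+1, 'cV[C]_(n k)) (i : 'I_L.+1) (a : C)
         (x y : 'cV[C]_(n i)),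
    h (\mxcol_k (dfwith zz i (a *: x + y) k))
    = a * h (\mxcol_k (dfwith zz i x k)) + h (\mxcol_k (dfwith zz i y k)).

Definition hol_grad (g : 'cV[C]_N -> C) (z : 'cV[C]_N) : 'cV[C]_N :=
  \col_k (derive1 (fun t : C^o => (g (z + t *: delta_mx k 0) : C^o)) 0).

(* For f = \sum_j |g_j|^2 with g_j holomorphic:
   df/dzbar = \sum_j g_j conj(g_j'),  d^2 f/(dzbar dz) = \sum_j conj(g_j') g_j'^T *)
Definition wgrad (m : nat) (g : 'I_m -> 'cV[C]_N -> C) (z : 'cV[C]_N)
  : 'cV[C]_N :=
  \sum_(j < m) (g j z *: conjmx (hol_grad (g j) z)).
Definition whess (m : nat) (g : 'I_m -> 'cV[C]_N -> C) (z : 'cV[C]_N)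
  : 'M[C]_N :=
  \sum_(j < m) (conjmx (hol_grad (g j) z) *m (hol_grad (g j) z)^T).

(* The matrix Xi: L = l-1 columns; column c has z_1 in block 0,
   -z_{c+2} (i.e. block lift ord0 c) in that block, 0 elsewhere. *)
Definition Xi (z : 'cV[C]_N) : 'M[C]_(N, L) :=
  \matrix_(k, c)
    ((\mxcol_i (if i == ord0 then submxcol z i
                else if i == lift ord0 c then - submxcol z i
                else 0)) : 'cV[C]_N) k 0.

End Defs.

From HB Require Import structures.
From mathcomp Require Import all_boot all_order all_algebra.
From mathcomp Require Import all_classical all_reals all_analysis.
From mathcomp Require Import complex.
Set Implicit Arguments. Unset Strict Implicit. Unset Printing Implicit Defensive.
Import Order.TTheory GRing.Theory Num.Theory.
Import numFieldTopology.Exports numFieldNormedType.Exports.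
Local Open Scope ring_scope.
Local Open Scope classical_set_scope.

(* The Hessian is the Gram matrix J^* J of the holomorphic Jacobian J of
   (g_1, ..., g_m), and the gradient is J^* (g_j(z))_j.  Since each g_j is
   linear in every block, its derivative along the direction (0, ..., z_i, ..., 0)
   is g~_j(z) whatever i, so J annihilates every column of Xi; hence
   Xi^* H = 0 and Xi^* b = 0.  For e > 0, a vector x in the kernel of
   H + e Xi Xi^* satisfies J x = 0 and Xi^* x = 0, so x = Xi y with
   Xi^* Xi y = 0, i.e. x = 0.  If H u + Xi Xi^* u = b then
   Xi^* Xi Xi^* u = Xi^* b = 0, so Xi Xi^* u = 0 and u solves
   H u + e Xi Xi^* u = b for every e > 0: the regularized solutions do not
   depend on e. *)

Lemma unitmx_ker0 (F : fieldType) p (A : 'M[F]_p) :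
  (forall x : 'cV[F]_p, A *m x = 0 -> x = 0) -> A \in unitmx.
Proof.
move=> ker0; rewrite -unitmx_tr -row_free_unit; apply/inj_row_free => v vA0.
have /ker0 : A *m v^T = 0 by rewrite -[A]trmxK -trmx_mul vA0 trmx0.
by move/(congr1 trmx); rewrite trmxK trmx0.
Qed.

Section ConjugateTranspose.
Variable R : realType.
Local Notation C := R[i].

Lemma adjmxM p q r (A : 'M[C]_(p, q)) (B : 'M[C]_(q, r)) :
  adjmx (A *m B) = adjmx B *m adjmx A.
Proof.
apply/matrixP => i j; rewrite !mxE rmorph_sum; apply: eq_bigr => k _.
by rewrite !mxE rmorphM mulrC.
Qed.

Lemma adjmxK p q (A : 'M[C]_(p, q)) : adjmx (adjmx A) = A.
Proof. by apply/matrixP => i j; rewrite !mxE conjCK. Qed.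

Lemma adjmx_mul_selfE p (v : 'cV[C]_p) :
  (adjmx v *m v) 0 0 = \sum_k `|v k 0| ^+ 2.
Proof. by rewrite !mxE; apply: eq_bigr => k _; rewrite !mxE normCK mulrC. Qed.

Lemma adjmx_mul_self_ge0 p (v : 'cV[C]_p) : 0 <= (adjmx v *m v) 0 0.
Proof. by rewrite adjmx_mul_selfE sumr_ge0 // => k _; rewrite exprn_ge0. Qed.

Lemma adjmx_mul_self_eq0 p (v : 'cV[C]_p) : (adjmx v *m v) 0 0 = 0 -> v = 0.
Proof.
rewrite adjmx_mul_selfE => /psumr_eq0P v0; apply/matrixP => k l.
rewrite (ord1 l) mxE; apply/eqP; rewrite -normr_eq0 -sqrf_eq0.
by apply/eqP/v0 => // j _; rewrite exprn_ge0.
Qed.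

Lemma adjmx_mul_gram p q (A : 'M[C]_(p, q)) (x : 'cV[C]_q) :
  adjmx x *m (adjmx A *m A *m x) = adjmx (A *m x) *m (A *m x).
Proof. by rewrite adjmxM !mulmxA. Qed.

Lemma gram_mulmx_eq0 p q (A : 'M[C]_(p, q)) (x : 'cV[C]_q) :
  adjmx A *m A *m x = 0 -> A *m x = 0.
Proof.
by move=> Ax0; apply: adjmx_mul_self_eq0; rewrite -adjmx_mul_gram Ax0 mulmx0 mxE.
Qed.

Lemma gram_addmx_eq0 p q r (A : 'M[C]_(p, q)) (B : 'M[C]_(r, q)) (e : C)
    (x : 'cV[C]_q) : 0 < e ->
  (adjmx A *m A + e *: (adjmx B *m B)) *m x = 0 -> A *m x = 0 /\ B *m x = 0.
Proof.
move=> e_gt0 /(congr1 (fun M => (adjmx x *m M) 0 0)).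
rewrite /= mulmxDl mulmxDr -scalemxAl -scalemxAr !adjmx_mul_gram mulmx0.
rewrite [X in X = _]mxE [X in _ + X]mxE [RHS]mxE => /eqP.
rewrite paddr_eq0 ?adjmx_mul_self_ge0 ?mulr_ge0 ?adjmx_mul_self_ge0 ?ltW //.
rewrite mulf_eq0 (gt_eqF e_gt0) /= => /andP[/eqP Ax0 /eqP Bx0].
by split; apply: adjmx_mul_self_eq0.
Qed.

End ConjugateTranspose.

Section RegularizedSystem.
Variables (R : realType) (p K m : nat).
Local Notation C := R[i].
Variables (J : 'M[C]_(m, p)) (X : 'M[C]_(p, K)) (v : 'cV[C]_m).
Hypothesis JX0 : J *m X = 0.
Hypothesis kerJ : forall x : 'cV[C]_p, adjmx J *m J *m x = 0 -> exists y, x = X *m y.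

Local Notation H := (adjmx J *m J).
Local Notation P := (X *m adjmx X).

Lemma regularized_unitmx (e : C) : 0 < e -> H + e *: P \in unitmx.
Proof.
move=> e_gt0; apply: unitmx_ker0 => x.
rewrite -{1}[X]adjmxK => /gram_addmx_eq0-/(_ e_gt0)[Jx0 +].
have [y ->] : exists y, x = X *m y by apply: kerJ; rewrite -mulmxA Jx0 mulmx0.
by rewrite mulmxA => /gram_mulmx_eq0.
Qed.

Lemma regularized_solve (e : C) : 0 < e ->
  invmx (H + e *: P) *m (adjmx J *m v) = invmx (H + P) *m (adjmx J *m v).
Proof.
move=> e_gt0; set u := invmx (H + P) *m _.
have XJ0 : adjmx X *m adjmx J = 0.
  by rewrite -adjmxM JX0; apply/matrixP => i j; rewrite !mxE conjC0.
have Hu : (H + P) *m u = adjmx J *m v.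
  by rewrite mulKVmx // -[P]scale1r regularized_unitmx ?ltr01.
have Pu0 : P *m u = 0.
  have : adjmx X *m X *m (adjmx X *m u) = 0.
    have := congr1 (mulmx (adjmx X)) Hu.
    by rewrite !mulmxA XJ0 !mul0mx mulmxDr !mulmxA XJ0 mul0mx add0r.
  by move/gram_mulmx_eq0; rewrite mulmxA.
have Heu : (H + e *: P) *m u = adjmx J *m v.
  by rewrite mulmxDl -scalemxAl Pu0 scaler0 addr0 -Hu mulmxDl Pu0 addr0.
by rewrite -Heu mulKmx ?regularized_unitmx.
Qed.

End RegularizedSystem.

Lemma derive1_affine (K : numFieldType) (a d : K) :
  derive1 (fun t : K^o => (a + t * d : K^o)) 0 = d.
Proof.
rewrite derive1E.
have : is_derive (0 : K^o) (1 : K^o) (fun t : K^o => (a + t * d : K^o)) d.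
  by apply: is_derive_eq; rewrite /= scaler0 !add0r; exact: mulr1.
by move=> ?; exact: derive_val.
Qed.

Section MultilinearGradient.
Variables (R : realType) (L : nat) (n : 'I_L.+1 -> nat).
Local Notation C := R[i].
Local Notation N := (\sum_(i < L.+1) n i)%N.

Lemma mxcol_dfwith_delta (z : 'cV[C]_N) i r t :
  z + t *: delta_mx (tagnat.Rank i r) 0 =
  \mxcol_k dfwith (submxcol z) i (t *: delta_mx r 0 + submxcol z i) k.
Proof.
apply/mxcolP => k; rewrite mxcolK submxcolD; case: dfwithP => [|k' ik'].
  rewrite addrC; congr (_ + _); apply/matrixP => s u; rewrite !mxE.
  by rewrite -val_eqE tagnat.eq_Rank eqxx.
rewrite -[RHS]addr0; congr (_ + _); apply/matrixP => s u; rewrite !mxE.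
by rewrite -val_eqE tagnat.eq_Rank eq_sym (negbTE ik') mulr0.
Qed.

Variables (h : 'cV[C]_N -> C) (z : 'cV[C]_N).
Hypothesis h_multilinear : multilinear h.

Definition hblock i (x : 'cV[C]_(n i)) : C^o :=
  h (\mxcol_k dfwith (submxcol z) i x k).
Arguments hblock : clear implicits.

Lemma hblock_is_linear i : linear (hblock i).
Proof. by move=> a x y; exact: h_multilinear. Qed.

HB.instance Definition _ i :=
  GRing.isLinear.Build C 'cV[C]_(n i) C^o *:%R (hblock i) (@hblock_is_linear i).

Lemma hblock_self i : hblock i (submxcol z i) = h z.
Proof.
rewrite /hblock -[z in RHS]submxcolK; congr h.
by apply: eq_mxcol => k; case: dfwithP.
Qed.

Lemma h_add_delta i r t :
  h (z + t *: delta_mx (tagnat.Rank i r) 0) = h z + t * hblock i (delta_mx r 0).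
Proof.
by rewrite mxcol_dfwith_delta -[h _]/(hblock i _) linearP /= hblock_self addrC.
Qed.

Lemma hol_grad_affine (c : C) i r :
  hol_grad (fun w => h w + c) z (tagnat.Rank i r) 0 = hblock i (delta_mx r 0).
Proof.
rewrite mxE; under eq_fun do rewrite h_add_delta addrAC.
exact: derive1_affine.
Qed.

Lemma hol_grad_affine_mulmx (c : C) (x : 'cV[C]_N) :
  ((hol_grad (fun w => h w + c) z)^T *m x) 0 0
  = \sum_i hblock i (submxcol x i).
Proof.
rewrite -[x]submxcolK -[hol_grad _ _]submxcolK tr_mxcol mul_mxrow_mxcol summxE.
apply: eq_bigr => i _; rewrite mxcolK {2}(matrix_sum_delta (submxcol x i)).
rewrite linear_sum mxE; apply: eq_bigr => r _.
by rewrite big_ord1 linearZ [X in X * _]mxE [X in X * _]mxE hol_grad_affine mulrC.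
Qed.

Lemma hol_grad_affine_Xi (c : C) : (hol_grad (fun w => h w + c) z)^T *m Xi z = 0.
Proof.
apply/matrixP => i k; rewrite ord1 [RHS]mxE.
set G := (hol_grad _ z)^T.
have -> : (G *m Xi z) 0 k = (G *m col k (Xi z)) 0 0.
  by rewrite !mxE; apply: eq_bigr => l _; rewrite !mxE.
have -> : col k (Xi z) = \mxcol_b (if b == ord0 then submxcol z b
    else if b == lift ord0 k then - submxcol z b else 0).
  by apply/matrixP => b l; rewrite ord1 [LHS]mxE [LHS]mxE.
rewrite hol_grad_affine_mulmx (bigD1 ord0) // (bigD1 (lift ord0 k)) //= big1.
  by rewrite !mxcolK !eqxx linearN /= !hblock_self addr0 addrN.
by move=> b /andP[/negPf b0 /negPf bk]; rewrite mxcolK b0 bk linear0.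
Qed.

End MultilinearGradient.

Section WirtingerGram.
Variables (R : realType) (L : nat) (n : 'I_L.+1 -> nat) (m : nat).
Local Notation C := R[i].
Local Notation N := (\sum_(i < L.+1) n i)%N.
Variables (g : 'I_m -> 'cV[C]_N -> C) (z : 'cV[C]_N).

Definition hol_jacobian : 'M[C]_(m, N) := \matrix_(j, k) hol_grad (g j) z k 0.

Lemma row_hol_jacobian j : row j hol_jacobian = (hol_grad (g j) z)^T.
Proof. by apply/rowP => k; rewrite !mxE. Qed.

Lemma whess_gram : whess g z = adjmx hol_jacobian *m hol_jacobian.
Proof.
apply/matrixP => k l; rewrite summxE !mxE; apply: eq_bigr => j _.
by rewrite !mxE big_ord1 !mxE.
Qed.

Lemma wgrad_gram : wgrad g z = adjmx hol_jacobian *m \col_j g j z.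
Proof.
apply/matrixP => k l; rewrite summxE !mxE; apply: eq_bigr => j _.
by rewrite !mxE mulrC.
Qed.

End WirtingerGram.

Lemma hol_jacobian_Xi (R : realType) (L : nat) (n : 'I_L.+1 -> nat) (m : nat)
    (h : 'I_m -> 'cV[R[i]]_(\sum_(i < L.+1) n i) -> R[i]) (c : 'I_m -> R[i])
    (z : 'cV[R[i]]_(\sum_(i < L.+1) n i)) :
  (forall j, multilinear (h j)) ->
  hol_jacobian (fun j w => h j w + c j) z *m Xi z = 0.
Proof.
move=> h_multilinear; apply/row_matrixP => j.
by rewrite row_mul row0 row_hol_jacobian hol_grad_affine_Xi.
Qed.

Theorem lemma9 (R : realType) (L : nat) (n : 'I_L.+1 -> nat) (m : nat)
    (gt : 'I_m -> 'cV[R[i]]_(\sum_(i < L.+1) n i) -> R[i])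
    (c : 'I_m -> R[i]) (z : 'cV[R[i]]_(\sum_(i < L.+1) n i)) :
  (forall j, multilinear (gt j)) ->
  let g := fun (j : 'I_m) (w : 'cV[R[i]]_(\sum_(i < L.+1) n i)) => gt j w + c j in
  let H := whess g z in
  let b := wgrad g z in
  let X := Xi z in
  (forall x : 'cV[R[i]]_(\sum_(i < L.+1) n i),
      H *m x = 0 <-> exists y : 'cV[R[i]]_L, x = X *m y) ->
  (H + X *m adjmx X) \in unitmx /\
  exists l : 'cV[R[i]]_(\sum_(i < L.+1) n i),
    ((fun eps : R => invmx (H + (Complex eps 0) *: (X *m adjmx X)) *m b)
       @ 0^'+ --> (l : 'cV[R[i]^o]_(\sum_(i < L.+1) n i))) /\
    z - invmx (H + X *m adjmx X) *m b = z - l.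
Proof.
move=> gt_multilinear g H b X kerH.
have JX0 : hol_jacobian g z *m X = 0 by apply: hol_jacobian_Xi.
have kerJ (x : 'cV_(\sum_(i < L.+1) n i)) :
    adjmx (hol_jacobian g z) *m hol_jacobian g z *m x = 0 -> exists y, x = X *m y.
  by rewrite -whess_gram => /kerH.
have unitH : H + X *m adjmx X \in unitmx.
  by rewrite -[X *m _]scale1r /H whess_gram (regularized_unitmx kerJ) ?ltr01.
have solveH e : 0 < e ->
    invmx (H + e *: (X *m adjmx X)) *m b = invmx (H + X *m adjmx X) *m b.
  by move=> e_gt0; rewrite /H /b whess_gram wgrad_gram regularized_solve.
split=> //; exists (invmx (H + X *m adjmx X) *m b); split=> //.
apply: (@cvg_near_cst R 'cV[R[i]^o]_(\sum_(i < L.+1) n i)).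
apply: filterS (nbhs_right_gt 0) => eps eps_gt0; apply: solveH.
by rewrite ltcE /= eqxx.
Qed.
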